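(* For each integer $k\ge 3$ and each integer $t\ge0$: $m_2^{(1)}(k-1,3t+2)=t v_k+2^{k-1}$, $m_2^{(1)}(k-1,3t+3)=(t+1)v_k$, and $m_2^{(1)}(k-1,3t+4)=(t+1)v_k+1$, where $v_k=2^k-1$.
   Context: For a prime power $q$ and $N\ge1$, a multiset of points in $\mathrm{PG}(N,q)$ is a map $\mathcal{K}$ from the points to $\mathbb{Z}_{\ge0}$, with $\mathcal{K}(S)=\sum_{P\in S}\mathcal{K}(P)$; its cardinality is $\mathcal{K}(\mathrm{PG}(N,q))$. Dimensions are projective (lines have dimension 1). For $0\le r\le N-1$ and a positive integer $w$, $m_q^{(r)}(N,w)$ is the maximum cardinality of a multiset of points in $\mathrm{PG}(N,q)$ such that every $r$-dimensional subspace has multiplicity at most $w$. *)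

From mathcomp Require Import all_boot all_order all_algebra.
Set Implicit Arguments. Unset Strict Implicit. Unset Printing Implicit Defensive.
Import GRing.Theory.

(* Since the only nonzero scalar of GF(2) is 1, the points of PG(N,2) are in
   bijection with the nonzero vectors of 'rV['F_2]_(N.+1).
   A projective r-dimensional subspace is the set of nonzero vectors of an
   (r+1)-dimensional vector subspace, represented as the row space of a
   matrix U : 'M_(r.+1, N.+1) of rank r.+1. *)

Definition vec2 (N : nat) := 'rV['F_2]_(N.+1).

(* A multiset of points: a map from vectors to nat; only its values on
   nonzero vectors (= points) are ever used. *)
Definition mset2 (N : nat) := {ffun vec2 N -> nat}.

Definition msubmult (N r : nat) (K : mset2 N) (U : 'M['F_2]_(r.+1, N.+1)) : nat :=
  (\sum_(v : vec2 N | (v != 0%R) && (v <= U)%MS) K v)%N.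

Definition mcard (N : nat) (K : mset2 N) : nat :=
  (\sum_(v : vec2 N | v != 0%R) K v)%N.

Definition admissible (r N w : nat) (K : mset2 N) : Prop :=
  forall U : 'M['F_2]_(r.+1, N.+1), \rank U = r.+1 -> (msubmult K U <= w)%N.

(* n = m_2^{(r)}(N, w): n is the maximum cardinality of an admissible multiset *)
Definition is_m2 (r N w n : nat) : Prop :=
  (exists K : mset2 N, admissible r w K /\ mcard K = n) /\
  (forall K : mset2 N, admissible r w K -> (mcard K <= n)%N).

(* A line of PG(N,2) is {p, q, p + q}, and the 2^N - 1 lines through a point P
   partition the other points.  Summing the line condition over them gives
   |K| <= K(P) + (2^N - 1)(w - K(P)), which decreases in K(P); so either every
   point has multiplicity at most b, and |K| <= (2^(N+1) - 1) b, or
   |K| <= b + 1 + (2^N - 1)(w - b - 1).  With b = t, t + 1, t + 1 this is the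
   claimed value.  It is attained by t (resp. t + 1, t + 1) copies of the whole
   space plus, respectively, the complement of a hyperplane (which meets every
   line in 0 or 2 points), nothing, or a single point. *)

From mathcomp Require Import all_boot all_order all_algebra zify.
Set Implicit Arguments. Unset Strict Implicit. Unset Printing Implicit Defensive.
Import GRing.Theory.
Local Open Scope ring_scope.

Lemma F2P (a : 'F_2) : a = 0 \/ a = 1.
Proof. by case: a => [[|[|m]] //= lt_m2]; [left | right]; apply/val_inj. Qed.

Lemma addrr_F2 m n (A : 'M['F_2]_(m, n)) : A + A = 0.
Proof. by rewrite -mulr2n -scaler_nat (_ : 2%:R = 0) ?scale0r //; apply/val_inj. Qed.

Lemma oppr_F2 m n (A : 'M['F_2]_(m, n)) : - A = A.
Proof. by apply/esym/eqP; rewrite -addr_eq0 addrr_F2. Qed.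

Lemma addr_eq0_F2 m n (A B : 'M['F_2]_(m, n)) : (A + B == 0) = (A == B).
Proof. by rewrite addr_eq0 oppr_F2. Qed.

Lemma addr_eql (V : zmodType) (x y : V) : (x + y == x) = (y == 0).
Proof. by rewrite -{2}[x]addr0 (inj_eq (addrI x)). Qed.

Lemma sub_rV_F2 n (u v : 'rV['F_2]_n) : (u <= v)%MS = (u == 0) || (u == v).
Proof.
apply/sub_rVP/idP => [[a ->] | /orP[] /eqP ->]; last 2 first.
- by exists 0; rewrite scale0r.
- by exists 1; rewrite scale1r.
by case: (F2P a) => ->; rewrite ?scale0r ?scale1r eqxx ?orbT.
Qed.

Lemma sub_col_mx_F2 n (u v x : 'rV['F_2]_n) :
  (x <= col_mx u v)%MS = [|| x == 0, x == u, x == v | x == u + v].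
Proof.
rewrite -addsmxE; apply/sub_addsmxP/idP => [[[a b]] /= -> | ].
  rewrite (mx11_scalar a) (mx11_scalar b) !mul_scalar_mx.
  by case: (F2P (a 0 0)) => ->; case: (F2P (b 0 0)) => ->;
    rewrite ?scale0r ?scale1r ?add0r ?addr0 eqxx ?orbT.
case/or4P => /eqP ->; [exists (0, 0) | exists (1, 0) | exists (0, 1) | exists (1, 1)];
  by rewrite /= ?mul0mx ?mul1mx ?addr0 ?add0r.
Qed.

Lemma rank_col_mx_rV_eq2 (F : fieldType) n (u v : 'rV[F]_n) :
  (\rank (col_mx u v) == 2)%N = (u != 0) && ~~ (v <= u)%MS.
Proof.
have uS : (u <= col_mx u v)%MS by rewrite -addsmxE addsmxSl.
have := ltn_leqif (mxrank_leqif_sup uS).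
rewrite (col_mx_sub u v u) submx_refl rank_rV eqn_leq rank_leq_row /=.
have [-> _ | u0 <-] //= := eqVneq u 0; apply/negbTE; rewrite -leqNgt.
have sub_v : (col_mx (0 : 'rV_n) v <= v)%MS by rewrite col_mx_sub sub0mx submx_refl.
exact: leq_trans (mxrankS sub_v) (rank_leq_row v).
Qed.

Lemma rank_col_mx_F2 n (p q : 'rV['F_2]_n) :
  (\rank (col_mx p q) == 2)%N = [&& p != 0, q != 0 & p != q].
Proof. by rewrite rank_col_mx_rV_eq2 sub_rV_F2 negb_or [q == p]eq_sym. Qed.

Lemma line_uniq_F2 n (p q : 'rV['F_2]_n) :
  p != 0 -> q != 0 -> p != q -> uniq [:: p; q; p + q].
Proof.
move=> p0 q0 pq; rewrite /= !inE negb_or pq.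
by rewrite -!(eq_sym (p + q)) addr_eql [p + q]addrC addr_eql p0 q0.
Qed.

Lemma line_meets_point_F2 n (p q e : 'rV['F_2]_n) : p != 0 -> q != 0 -> p != q ->
  ((p == e) + (q == e) + ((p + q)%R == e) <= 1)%N.
Proof.
move=> p0 q0 pq; have := count_uniq_mem e (line_uniq_F2 p0 q0 pq).
by rewrite /= addn0 addnA => ->; apply: leq_b1.
Qed.

Lemma msubmult_line N (K : mset2 N) (p q : vec2 N) :
  p != 0 -> q != 0 -> p != q -> msubmult K (col_mx p q) = (K p + K q + K (p + q)%R)%N.
Proof.
move=> p0 q0 pq; rewrite /msubmult (eq_bigl (fun x => x \in [:: p; q; p + q])) => [|x].
  by rewrite -big_uniq ?line_uniq_F2 //= !big_cons big_nil addn0 addnA.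
rewrite (sub_col_mx_F2 p q x) !inE; have [-> | _] /= := eqVneq x 0; last by rewrite orbA.
by rewrite !(eq_sym 0) (negbTE p0) (negbTE q0) addr_eq0_F2 (negbTE pq).
Qed.

Lemma admissible_linesP N w (K : mset2 N) :
  admissible 1 w K <->
  forall p q : vec2 N, p != 0 -> q != 0 -> p != q -> (K p + K q + K (p + q)%R <= w)%N.
Proof.
split => [admK p q p0 q0 pq | lineK U rkU].
  by rewrite -msubmult_line //; apply/admK/eqP; rewrite rank_col_mx_F2 p0 q0 pq.
move: rkU => /eqP; rewrite -(vsubmxK (U : 'M_(1 + 1, N.+1))) rank_col_mx_F2.
by case/and3P => p0 q0 pq; rewrite msubmult_line ?lineK.
Qed.

Lemma card_vec2 N : #|{: vec2 N}| = (2 ^ N.+1)%N.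
Proof. by rewrite card_mx card_Fp // mul1n. Qed.

Lemma sum_nonzero_const N c : (\sum_(x : vec2 N | x != 0%R) c = (2 ^ N.+1 - 1) * c)%N.
Proof. by rewrite sum_nat_const cardC1 card_vec2 subn1. Qed.

Lemma mcard_star_bound N w (K : mset2 N) (P : vec2 N) : admissible 1 w K -> P != 0 ->
  ((2 ^ N - 1) * K P + (mcard K - K P) <= (2 ^ N - 1) * w)%N.
Proof.
move=> /admissible_linesP admK P0.
pose Z := [set~ (0 : vec2 N)] :\ P.
have cardZ : #|Z| = (2 * (2 ^ N - 1))%N.
  have := cardsD1 P [set~ 0]; rewrite cardsC1 card_vec2 !inE P0 expnS.
  rewrite -/Z /=; have := expn_gt0 2 N; lia.
have mcardE : mcard K = (K P + \sum_(Q in Z) K Q)%N.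
  by rewrite /mcard (bigD1 P) //=; congr (_ + _)%N; apply: eq_bigl => Q; rewrite !inE andbC.
have shiftZ : (\sum_(Q in Z) K (P + Q)%R = \sum_(Q in Z) K Q)%N.
  rewrite [RHS](reindex_inj (addrI P)); apply: eq_bigl => Q.
  by rewrite /Z !inE addr_eql addr_eq0_F2 andbC [P == Q]eq_sym.
(* Q and P + Q run over the same line through P, so every such line is counted twice. *)
have : (\sum_(Q in Z) (K P + K Q + K (P + Q)%R) <= \sum_(Q in Z) w)%N.
  by apply: leq_sum => Q; rewrite !inE => /andP[QP Q0]; apply: admK; rewrite // eq_sym.
rewrite !big_split /= shiftZ !sum_nat_const cardZ mcardE.
set R := (\sum_(Q in Z) K Q)%N.
rewrite -!mulnA; lia.
Qed.

Lemma mcard_le_max N w b (K : mset2 N) : (0 < N)%N -> admissible 1 w K ->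
  (mcard K <= maxn ((2 ^ N.+1 - 1) * b) (b.+1 + (2 ^ N - 1) * (w - b.+1)))%N.
Proof.
move=> N_gt0 admK; rewrite leq_max.
have [/forall_inP leKb | ] := boolP [forall (P : vec2 N | P != 0), (K P <= b)%N].
  by rewrite /mcard -sum_nonzero_const leq_sum.
rewrite negb_forall_in => /exists_inP[P P0]; rewrite -ltnNge => ltbP.
have : (2 <= 2 ^ N)%N by rewrite -{1}(expn1 2) leq_pexp2l.
move: ltbP (mcard_star_bound admK P0); rewrite expnS; nia.
Qed.

Lemma is_m2_witness N w n b (K : mset2 N) : (0 < N)%N ->
  admissible 1 w K -> mcard K = n ->
  (maxn ((2 ^ N.+1 - 1) * b) (b.+1 + (2 ^ N - 1) * (w - b.+1)) <= n)%N ->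
  is_m2 1 N w n.
Proof.
move=> N_gt0 admK cardK le_n; split; first by exists K.
by move=> K' /(mcard_le_max b N_gt0)/leq_trans; apply.
Qed.

Definition shifted_indicator N c (S : {set vec2 N}) : mset2 N :=
  [ffun x => (c + (x \in S))%N].

Lemma admissible_shifted_indicator N c s w (S : {set vec2 N}) : (3 * c + s <= w)%N ->
  (forall p q : vec2 N, p != 0 -> q != 0 -> p != q ->
     ((p \in S) + (q \in S) + ((p + q)%R \in S) <= s)%N) ->
  admissible 1 w (shifted_indicator c S).
Proof.
move=> le_w lineS; apply/admissible_linesP => p q p0 q0 pq; rewrite !ffunE.
by have := lineS p q p0 q0 pq; lia.
Qed.

Lemma mcard_shifted_indicator N c (S : {set vec2 N}) :
  mcard (shifted_indicator c S) = ((2 ^ N.+1 - 1) * c + #|S :\ 0%R|)%N.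
Proof.
rewrite /mcard; under eq_bigr do rewrite ffunE.
rewrite big_split /= sum_nonzero_const; congr (_ + _)%N.
have -> : S :\ 0 = [set x | (x != 0) && (x \in S)] by apply/setP => x; rewrite !inE.
by rewrite -sum1dep_card big_mkcondr.
Qed.

Lemma card_affine_F2 N : #|[set x : vec2 N | x ord0 ord0 == 1]| = (2 ^ N)%N.
Proof.
set H := [set x | _].
have HC : +%R (const_mx 1) @^-1: H = ~: H.
  by apply/setP => x; rewrite !inE !mxE; case: (F2P (x ord0 ord0)) => ->.
have := cardsC H; rewrite -HC card_preimset ?card_vec2 ?expnS; [lia | exact: addrI].
Qed.

Lemma is_m2_3t2 N t : (1 < N)%N ->
  is_m2 1 N (3 * t + 2) (t * (2 ^ N.+1 - 1) + 2 ^ N).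
Proof.
move=> N_gt1; pose H := [set x : vec2 N | x ord0 ord0 == 1].
have lineH : forall p q : vec2 N, p != 0 -> q != 0 -> p != q ->
    ((p \in H) + (q \in H) + ((p + q)%R \in H) <= 2)%N.
  move=> p q _ _ _; rewrite !inE mxE.
  by case: (F2P (p ord0 ord0)) => ->; case: (F2P (q ord0 ord0)) => ->.
apply: (is_m2_witness (b := t) (ltnW N_gt1) (admissible_shifted_indicator (leqnn _) lineH)).
  by rewrite mcard_shifted_indicator mulnC -(card_affine_F2 N) (cardsD1 0 H) inE mxE.
have a4 : (2 ^ 2 <= 2 ^ N)%N by rewrite leq_pexp2l.
rewrite geq_max expnS; apply/andP; split; nia.
Qed.

Lemma is_m2_3t3 N t : (1 < N)%N -> is_m2 1 N (3 * t + 3) (t.+1 * (2 ^ N.+1 - 1)).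
Proof.
move=> N_gt1; have line0 : forall p q : vec2 N, p != 0 -> q != 0 -> p != q ->
    ((p \in set0) + (q \in set0) + ((p + q)%R \in set0) <= 0)%N.
  by move=> *; rewrite !inE.
have le_w : (3 * t.+1 + 0 <= 3 * t + 3)%N by lia.
apply: (is_m2_witness (b := t.+1) (ltnW N_gt1) (admissible_shifted_indicator le_w line0)).
  by rewrite mcard_shifted_indicator set0D cards0 addn0 mulnC.
have a4 : (2 ^ 2 <= 2 ^ N)%N by rewrite leq_pexp2l.
rewrite geq_max expnS; apply/andP; split; nia.
Qed.

Lemma is_m2_3t4 N t : (1 < N)%N -> is_m2 1 N (3 * t + 4) (t.+1 * (2 ^ N.+1 - 1) + 1).
Proof.
move=> N_gt1; pose e : vec2 N := const_mx 1.
have e0 : e != 0 by apply/eqP => /matrixP/(_ ord0 ord0); rewrite !mxE.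
have lineE : forall p q : vec2 N, p != 0 -> q != 0 -> p != q ->
    ((p \in [set e]) + (q \in [set e]) + ((p + q)%R \in [set e]) <= 1)%N.
  by move=> p q p0 q0 pq; rewrite !in_set1 line_meets_point_F2.
have le_w : (3 * t.+1 + 1 <= 3 * t + 4)%N by lia.
apply: (is_m2_witness (b := t.+1) (ltnW N_gt1) (admissible_shifted_indicator le_w lineE)).
  rewrite mcard_shifted_indicator mulnC; congr (_ + _)%N.
  by have := cardsD1 0 [set e]; rewrite cards1 in_set1 eq_sym (negbTE e0) add0n.
have a4 : (2 ^ 2 <= 2 ^ N)%N by rewrite leq_pexp2l.
rewrite geq_max expnS; apply/andP; split; nia.
Qed.

Theorem mainTheorem4 (k t : nat) : (3 <= k)%N ->
  let v := (2 ^ k - 1)%N in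
  [/\ is_m2 1 (k - 1) (3 * t + 2) (t * v + 2 ^ (k - 1))%N,
      is_m2 1 (k - 1) (3 * t + 3) (t.+1 * v)%N
    & is_m2 1 (k - 1) (3 * t + 4) (t.+1 * v + 1)%N].
Proof.
case: k => [|N] // N_gt1 v; rewrite /v subn1 /=.
by split; [apply: is_m2_3t2 | apply: is_m2_3t3 | apply: is_m2_3t4].
Qed.
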